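(* Let $0\le\mu<L<+\infty$, $N\ge1$, $R\ge0$, let $H=\{h_{i,k}\}$ define a fixed-step method with $N$ steps, and let $b\in\mathbb{R}^{N+1}$, $C\in\mathbb{S}^{N+2}$. Then the supremum defining $w^{sdp}_{\mu,L}(R,H,N,b,C)$ is finite and attained by some feasible $(G,f)$.
   Context: Fixed-step method with $N$ steps: scalars $h_{i,k}$ for $1\le i\le N$, $0\le k\le N-1$, with $h_{i,k}=0$ for $k\ge i$ (a lower-triangular $H\in\mathbb{R}^{N\times N}$). Let $I=\{0,1,\dots,N,*\}$ and $e_1,\dots,e_{N+2}$ the standard basis of $\mathbb{R}^{N+2}$. For $i=0,\dots,N$ let $h_i=(-h_{i,0},\dots,-h_{i,i-1},0,\dots,0,1)^{\top}\in\mathbb{R}^{N+2}$ (last entry $1$) and $u_i=e_{i+1}$; let $h_*=u_*=0$. For $i,j\in I$ define the symmetric matrix $A_{ij}$ by $2A_{ij}=\frac{L}{L-\mu}\big(u_j(h_i-h_j)^{\top}+(h_i-h_j)u_j^{\top}\big)+\frac{1}{L-\mu}(u_i-u_j)(u_i-u_j)^{\top}+\frac{\mu}{L-\mu}\big(u_i(h_j-h_i)^{\top}+(h_j-h_i)u_i^{\top}\big)+\frac{L\mu}{L-\mu}(h_i-h_j)(h_i-h_j)^{\top}$, and $A_R=e_{N+2}e_{N+2}^{\top}$. Then $w^{sdp}_{\mu,L}(R,H,N,b,C)$ is the supremum of $b^{\top}f+\mathrm{Tr}(CG)$ over $G\in\mathbb{S}^{N+2}$ (symmetric matrices), $f=(f_0,\dots,f_N)\in\mathbb{R}^{N+1}$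 subject to $f_j-f_i+\mathrm{Tr}(GA_{ij})\le0$ for all $i,j\in I$ (with $f_*:=0$), $\mathrm{Tr}(GA_R)\le R^2$, and $G\succeq0$. *)

From HB Require Import structures.
From mathcomp Require Import all_boot all_order all_algebra.
From mathcomp Require Import reals.
Set Implicit Arguments. Unset Strict Implicit. Unset Printing Implicit Defensive.
Import Order.TTheory GRing.Theory Num.Theory.
Local Open Scope ring_scope.

Section PEP.
Variables (R : realType) (N : nat).

(* The method H is an N x N matrix; row r (0-based) stores h_{r+1, .}:
   H r k = h_{r+1,k}.  hentry H a k returns h_{a+1,k} (0 outside range). *)
Definition hentry (H : 'M[R]_N) (a k : nat) : R :=
  match @insub _ (fun x => x < N)%N _ a, @insub _ (fun x => x < N)%N _ k with
  | Some i, Some j => H i j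
  | _, _ => 0
  end.

(* Strict lower triangularity: h_{i,k} = 0 for k >= i (i 1-based). *)
Definition fixed_step (H : 'M[R]_N) : Prop :=
  forall r k : 'I_N, (r < k)%N -> H r k = 0.

(* h_i = (-h_{i,0},...,-h_{i,i-1},0,...,0,1) in R^{N+2}, for i = 0..N
   (0-based coordinates 0..N+1). *)
Definition hvec (H : 'M[R]_N) (i : 'I_N.+1) : 'cV[R]_N.+2 :=
  \col_(j < N.+2)
    (if j == ord_max then 1
     else if (j < i)%N then - hentry H i.-1 j else 0).

(* u_i = e_{i+1} (1-based), i.e. 0-based coordinate i. *)
Definition uvec (i : 'I_N.+1) : 'cV[R]_N.+2 :=
  \col_(j < N.+2) (if (j == i :> nat) then 1 else 0).

(* Index set I = {0,...,N,*}; None stands for *. *)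
Definition hI (H : 'M[R]_N) (o : option 'I_N.+1) : 'cV[R]_N.+2 :=
  if o is Some i then hvec H i else 0.
Definition uI (o : option 'I_N.+1) : 'cV[R]_N.+2 :=
  if o is Some i then uvec i else 0.
Definition fI (f : 'cV[R]_N.+1) (o : option 'I_N.+1) : R :=
  if o is Some i then f i 0 else 0.

Definition Amat (mu L : R) (H : 'M[R]_N) (i j : option 'I_N.+1) : 'M[R]_N.+2 :=
  let hi := hI H i in let hj := hI H j in
  let ui := uI i in let uj := uI j in
  2^-1 *:
   ( (L / (L - mu)) *: (uj *m (hi - hj)^T + (hi - hj) *m uj^T)
   + (1 / (L - mu)) *: ((ui - uj) *m (ui - uj)^T)
   + (mu / (L - mu)) *: (ui *m (hj - hi)^T + (hj - hi) *m ui^T)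
   + (L * mu / (L - mu)) *: ((hi - hj) *m (hi - hj)^T) ).

Definition ARmat : 'M[R]_N.+2 := delta_mx ord_max ord_max.

Definition sym_mx (G : 'M[R]_N.+2) : Prop := G^T = G.

Definition psd (G : 'M[R]_N.+2) : Prop :=
  forall x : 'cV[R]_N.+2, 0 <= (x^T *m G *m x) 0 0.

Definition sdp_feasible (mu L Rad : R) (H : 'M[R]_N)
    (G : 'M[R]_N.+2) (f : 'cV[R]_N.+1) : Prop :=
  [/\ sym_mx G, psd G,
      (forall i j : option 'I_N.+1, fI f j - fI f i + \tr (G *m Amat mu L H i j) <= 0)
    & \tr (G *m ARmat) <= Rad ^+ 2].

Definition sdp_obj (b : 'cV[R]_N.+1) (C : 'M[R]_N.+2)
    (G : 'M[R]_N.+2) (f : 'cV[R]_N.+1) : R :=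
  \sum_(i < N.+1) b i 0 * f i 0 + \tr (C *m G).

End PEP.

From HB Require Import structures.
From mathcomp Require Import all_boot all_order all_algebra.
From mathcomp Require Import all_classical all_reals all_analysis.
From mathcomp Require Import ring lra zify.
Import Order.TTheory GRing.Theory Num.Theory.
Import numFieldNormedType.Exports.
Local Open Scope ring_scope.
Set Implicit Arguments. Unset Strict Implicit.

(* The feasible set, encoded as a vector of R^((N+2)^2 + N+1), is closed and
   contains (G, f) = (0, 0), and the objective is linear, so it suffices to bound
   the feasible set. The constraint Tr(G A_R) <= R^2 bounds G_(N+1,N+1). Summing
   the interpolation constraints between the points k and star eliminates f_k and,
   together with G >= 0, gives G_kk <= (L+mu)^2 h_k^T G h_k; as h_k only involves
   the coordinates before k and the last one, this bounds the diagonal of G by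
   induction on k, and positive semidefiniteness bounds the other entries. Finally
   each f_k is squeezed between the traces occurring in the same two constraints. *)

Section BilinearForm.
Variables (R : comPzRingType) (n : nat).
Implicit Types (G : 'M[R]_n) (x y z : 'cV[R]_n).

Definition bform G x y := (x^T *m G *m y) 0 0.

Lemma bformE G x y : bform G x y = \sum_i \sum_j x i 0 * G i j * y j 0.
Proof.
rewrite /bform mxE; under eq_bigr do rewrite mxE big_distrl /=.
rewrite exchange_big /=; apply: eq_bigr => i _; apply: eq_bigr => j _.
by rewrite !mxE.
Qed.

Lemma bformDl G x y z : bform G (x + y) z = bform G x z + bform G y z.
Proof. by rewrite /bform linearD /= !mulmxDl mxE. Qed.

Lemma bformDr G x y z : bform G z (x + y) = bform G z x + bform G z y.
Proof. by rewrite /bform !mulmxDr mxE. Qed.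

Lemma bformZl G a x z : bform G (a *: x) z = a * bform G x z.
Proof. by rewrite /bform linearZ /= -!scalemxAl mxE. Qed.

Lemma bformZr G a x z : bform G z (a *: x) = a * bform G z x.
Proof. by rewrite /bform -!scalemxAr mxE. Qed.

Lemma bformNl G x z : bform G (- x) z = - bform G x z.
Proof. by rewrite -scaleN1r bformZl mulN1r. Qed.

Lemma bformNr G x z : bform G z (- x) = - bform G z x.
Proof. by rewrite -scaleN1r bformZr mulN1r. Qed.

Lemma bform0l G z : bform G 0 z = 0.
Proof. by rewrite /bform trmx0 !mul0mx mxE. Qed.

Lemma bform0r G z : bform G z 0 = 0.
Proof. by rewrite /bform mulmx0 mxE. Qed.

Lemma bformC G x y : G^T = G -> bform G x y = bform G y x.
Proof.
move=> symG; rewrite /bform -[x^T *m G *m y]trmxK [LHS]mxE.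
by rewrite !trmx_mul !trmxK symG mulmxA.
Qed.

Lemma mxtrace_mul_outer G x y : \tr (G *m (x *m y^T)) = bform G y x.
Proof. by rewrite mulmxA mxtrace_mulC /bform mulmxA /mxtrace big_ord1. Qed.

Lemma bform_delta G a b : bform G (delta_mx a 0) (delta_mx b 0) = G a b.
Proof.
rewrite bformE (bigD1 a) //= [X in _ + X]big1 => [|i /negbTE ia]; last first.
  by apply: big1 => j _; rewrite !mxE ia mul0r mul0r.
rewrite addr0 (bigD1 b) //= [X in _ + X]big1 => [|j /negbTE jb].
  by rewrite !mxE !eqxx mul1r mulr1 addr0.
by rewrite !mxE jb mulr0.
Qed.

End BilinearForm.

Section PsdMatrix.
Variables (R : realFieldType) (n : nat) (G : 'M[R]_n).
Hypotheses (symG : G^T = G) (psdG : forall x, 0 <= bform G x x).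

Lemma psd_entry_le a b : `|G a b| <= (G a a + G b b) / 2.
Proof.
have := psdG (delta_mx a 0 + delta_mx b 0).
have := psdG (delta_mx a 0 - delta_mx b 0).
rewrite !(bformDl, bformDr, bformNl, bformNr, bform_delta).
have -> : G b a = G a b by rewrite -[in LHS]symG mxE.
by move=> h1 h2; rewrite ler_norml; apply/andP; split; lra.
Qed.

Lemma psd_bform_le (x : 'cV[R]_n) (D : R) :
  (forall i, x i 0 != 0 -> G i i <= D) ->
  bform G x x <= (\sum_i `|x i 0|) ^+ 2 * D.
Proof.
move=> xD; rewrite bformE expr2 -mulrA mulr_suml; apply: ler_sum => i _.
rewrite mulr_suml mulr_sumr; apply: ler_sum => j _.
have [->|xi0] := eqVneq (x i 0) 0; first by rewrite !mul0r normr0 !mul0r.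
have [->|xj0] := eqVneq (x j 0) 0; first by rewrite mulr0 normr0 mul0r mulr0.
have GijD : `|G i j| <= D.
  by apply: le_trans (psd_entry_le i j) _; have := xD _ xi0; have := xD _ xj0; lra.
apply: le_trans (ler_norm _) _; rewrite !normrM -mulrA [`|G i j| * _]mulrC.
by rewrite ler_wpM2l // ler_wpM2l.
Qed.

End PsdMatrix.

Section Interpolation.
Variables (R : realType) (N : nat) (mu L : R) (H : 'M[R]_N).
Hypothesis mu_lt_L : mu < L.

Lemma mxtrace_mul_Amat (G : 'M[R]_N.+2) i j :
  let hi := hI H i in let hj := hI H j in let ui := uI R i in let uj := uI R j in
  \tr (G *m Amat mu L H i j) =
    2^-1 * (L / (L - mu) * (bform G (hi - hj) uj + bform G uj (hi - hj))
    + 1 / (L - mu) * bform G (ui - uj) (ui - uj)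
    + mu / (L - mu) * (bform G (hj - hi) ui + bform G ui (hj - hi))
    + L * mu / (L - mu) * bform G (hi - hj) (hi - hj)).
Proof.
rewrite /Amat /= -scalemxAr mxtraceZ !mulmxDr !mxtraceD -!scalemxAr !mxtraceZ.
by rewrite !mulmxDr !mxtraceD !mxtrace_mul_outer.
Qed.

(* Summing the constraints for the index pairs (star, k) and (k, star) eliminates f_k. *)
Lemma interpolation_star_le (G : 'M[R]_N.+2) (f : 'cV[R]_N.+1) k :
  G^T = G ->
  (forall i j, fI f j - fI f i + \tr (G *m Amat mu L H i j) <= 0) ->
  bform G (uvec R k) (uvec R k) - (L + mu) * bform G (uvec R k) (hvec H k)
    + L * mu * bform G (hvec H k) (hvec H k) <= 0.
Proof.
move=> symG interp; have := lerD (interp None (Some k)) (interp (Some k) None).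
rewrite !mxtrace_mul_Amat /= !(sub0r, subr0, bformNl, bformNr, bform0l, bform0r).
rewrite (bformC (hvec H k) (uvec R k) symG) addr0 => sum_le.
have Lmu_gt0 : 0 < L - mu by rewrite subr_gt0.
have Lmu_inv_gt0 : 0 < (L - mu)^-1 by rewrite invr_gt0.
rewrite -(pmulr_lle0 _ Lmu_inv_gt0); apply: le_trans sum_le.
by rewrite le_eqVlt; apply/orP; left; apply/eqP; field; rewrite gt_eqF.
Qed.
End Interpolation.

Lemma norm_mxtrace_mul_le (R : realDomainType) n (G A : 'M[R]_n) D :
  (forall i j, `|G i j| <= D) -> `|\tr (G *m A)| <= D * \sum_i \sum_j `|A j i|.
Proof.
move=> GD; rewrite /mxtrace mulr_sumr; apply: le_trans (ler_norm_sum _ _ _) _.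
apply: ler_sum => i _; rewrite mxE mulr_sumr; apply: le_trans (ler_norm_sum _ _ _) _.
by apply: ler_sum => j _; rewrite normrM ler_wpM2r.
Qed.

Section FeasibleBounds.
Variables (R : realType) (N : nat) (mu L Rad : R) (H : 'M[R]_N).
Hypotheses (mu_ge0 : 0 <= mu) (mu_lt_L : mu < L).

Lemma uvec_delta (k : 'I_N.+1) : uvec R k = delta_mx (widen_ord (leqnSn _) k) 0.
Proof. by apply/matrixP => i j; rewrite !mxE ord1 eqxx andbT -val_eqE; case: (_ == _). Qed.

Lemma hvec_support k (i : 'I_N.+2) :
  hvec H k i 0 != 0 -> i = ord_max \/ (i < k)%N.
Proof.
rewrite mxE; have [->|_] := eqVneq i ord_max; first by left.
by case: ltnP => [|_]; [right | rewrite eqxx].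
Qed.

Lemma mxtrace_mul_ARmat (G : 'M[R]_N.+2) : \tr (G *m ARmat R N) = G ord_max ord_max.
Proof.
rewrite /ARmat -(mul_delta_mx (0 : 'I_1)) -[delta_mx 0 ord_max]trmx_delta.
by rewrite mxtrace_mul_outer bform_delta.
Qed.

Lemma feasible_diag_le G f k : sdp_feasible mu L Rad H G f ->
  let k' := widen_ord (leqnSn _) k in
  G k' k' <= (L + mu) ^+ 2 * bform G (hvec H k) (hvec H k).
Proof.
case=> symG psdG interp _ /=; rewrite -bform_delta -uvec_delta.
have := interpolation_star_le mu_lt_L k symG interp.
have := psdG (uvec R k - (L + mu) *: hvec H k).
rewrite -/(bform _ _ _) !(bformDl, bformDr, bformNl, bformNr, bformZl, bformZr).
rewrite (bformC (hvec H k) (uvec R k) symG).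
have := psdG (hvec H k); rewrite -/(bform _ _ _).
set q := bform G (uvec R k) (uvec R k); set b := bform G (uvec R k) (hvec H k).
set p := bform G (hvec H k) (hvec H k).
have : 0 <= L * mu by rewrite mulr_ge0 // (le_trans mu_ge0 (ltW mu_lt_L)).
(* 2 q <= 2 (L + mu) b - 2 L mu p <= q + (L + mu)^2 p - 2 L mu p *)
nra.
Qed.
Lemma feasible_diag_bounded :
  exists D, forall G f, sdp_feasible mu L Rad H G f -> forall i, G i i <= D.
Proof.
pose s k := (\sum_i `|hvec H k i 0|) ^+ 2.
pose c := 1 + (L + mu) ^+ 2 * \sum_k s k.
have s_le k : (L + mu) ^+ 2 * s k <= c.
  rewrite /c (bigD1 k) //= mulrDr addrCA lerDl addr_ge0 // mulr_ge0 ?sqr_ge0 //.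
  by apply: sumr_ge0 => ? _; apply: sqr_ge0.
have c_ge1 : 1 <= c.
  by rewrite lerDl mulr_ge0 ?sqr_ge0 // sumr_ge0 // => k _; apply: sqr_ge0.
exists (c ^+ N.+1 * Rad ^+ 2) => G f feas i.
have [symG psdG _ ARle] := feas.
(* The claim for m covers the coordinates the vectors h_k with k < m depend on. *)
suff diag_le m j : (j == ord_max) || (j < m)%N -> G j j <= c ^+ m * Rad ^+ 2.
  by apply: diag_le; rewrite -val_eqE /=; have := ltn_ord i; lia.
elim: m j => [|m IH] j.
  by rewrite orbF => /eqP ->; rewrite expr0 mul1r -mxtrace_mul_ARmat.
have X_ge0 : 0 <= c ^+ m * Rad ^+ 2 by rewrite mulr_ge0 ?sqr_ge0 ?exprn_ge0 // (le_trans ler01).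
have mono : c ^+ m * Rad ^+ 2 <= c ^+ m.+1 * Rad ^+ 2.
  by rewrite [c ^+ m.+1]exprS -mulrA ler_peMl.
rewrite ltnS leq_eqVlt orbCA => /orP[/eqP jm|/IH/le_trans]; last exact.
have [->|jmax] := eqVneq j ord_max; first by apply/(le_trans _ mono)/IH; rewrite eqxx.
have j_lt : (j < N.+1)%N by move: jmax (ltn_ord j); rewrite -val_eqE /=; lia.
pose k := Ordinal j_lt; have -> : j = widen_ord (leqnSn _) k by apply: val_inj.
apply: le_trans (feasible_diag_le k feas) _.
have h_le : bform G (hvec H k) (hvec H k) <= s k * (c ^+ m * Rad ^+ 2).
  apply: psd_bform_le => // i' /hvec_support[->|]; first by apply: IH; rewrite eqxx.
  by rewrite /= jm => i'm; apply: IH; rewrite i'm orbT.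
apply: le_trans (ler_wpM2l (sqr_ge0 _) h_le) _.
by rewrite [c ^+ m.+1]exprS -mulrA [leLHS]mulrA ler_wpM2r.
Qed.

Lemma feasible_entry_bounded : exists D, forall G f,
  sdp_feasible mu L Rad H G f -> forall i j, `|G i j| <= D.
Proof.
have [D diag_le] := feasible_diag_bounded; exists D => G f feas i j.
have [symG psdG _ _] := feas; apply: le_trans (psd_entry_le symG psdG i j) _.
by have := diag_le _ _ feas i; have := diag_le _ _ feas j; lra.
Qed.

Lemma feasible_f_bounded : exists B, forall G f,
  sdp_feasible mu L Rad H G f -> forall k, `|f k 0| <= B.
Proof.
have [D entry_le] := feasible_entry_bounded.
have norm_le (x t1 t2 B1 B2 : R) : x + t1 <= 0 -> - x + t2 <= 0 ->
    `|t1| <= B1 -> `|t2| <= B2 -> `|x| <= B1 + B2.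
  by rewrite !ler_norml => ? ? /andP[? ?] /andP[? ?]; apply/andP; split; lra.
pose S (A : 'M[R]_N.+2) := \sum_i \sum_j `|A j i|.
pose Sk k := S (Amat mu L H None (Some k)) + S (Amat mu L H (Some k) None).
have Sk_ge0 k : 0 <= Sk k by rewrite addr_ge0 // sumr_ge0 // => i _; apply: sumr_ge0.
exists (D * \sum_k Sk k) => G f feas k; have [_ _ interp _] := feas.
have D_ge0 : 0 <= D by apply: le_trans (entry_le _ _ feas ord0 ord0).
have le1 := interp None (Some k); have le2 := interp (Some k) None.
rewrite /= subr0 in le1; rewrite /= sub0r in le2.
have trace_le A := norm_mxtrace_mul_le A (entry_le _ _ feas).
apply: le_trans (norm_le _ _ _ _ _ le1 le2 (trace_le _) (trace_le _)) _.
rewrite -mulrDr ler_wpM2l // (bigD1 k) //= lerDl.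
by apply: sumr_ge0 => j _.
Qed.

End FeasibleBounds.

(* Otherwise the point of a [continuous] lemma would become an implicit argument. *)
Unset Implicit Arguments.
Local Open Scope classical_set_scope.

Section ClosedSets.
Context {T : topologicalType} {R : realType}.

Lemma closed_le_continuous (f g : T -> R) :
  continuous f -> continuous g -> closed [set x | f x <= g x].
Proof.
move=> cf cg; have -> : [set x | f x <= g x] = (fun x => f x - g x) @^-1` [set y | y <= 0].
  by apply/seteqP; split => x /=; rewrite subr_le0.
by apply: preimage_closed => [x _|]; [exact: (continuousB (cf x) (cg x)) | exact: closed_le].
Qed.

Lemma closed_forall (I : Type) (P : I -> set T) :
  (forall i, closed (P i)) -> closed [set x | forall i, P i x].
Proof.
move=> clP; have -> : [set x | forall i, P i x] = \bigcap_(i in [set: I]) P i.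
  by apply/seteqP; split => x /= Px i //; apply: Px.
by apply: closed_bigI => i _; apply: clP.
Qed.

Lemma continuous_sum_mul_entries m n (F : T -> 'M[R]_(m, n)) (a : 'I_m -> 'I_n -> R) :
  (forall i j, continuous (fun t => F t i j)) ->
  continuous (fun t => \sum_i \sum_j a i j * F t i j).
Proof.
move=> cF t; apply: continuous_big => [|i _]; first exact: add_continuous.
apply: continuous_big => [|j _ s]; first exact: add_continuous.
by apply: continuousM; [apply: cst_continuous | apply: cF].
Qed.

End ClosedSets.

Lemma bounded_set_rV {R : realType} {n : nat} (A : set 'rV[R]_n) (M : R) :
  (forall v, A v -> forall i, `|v 0 i| <= M) -> bounded_set A.
Proof.
move=> AM; exists (Num.max M 0); split; first exact: num_real.
move=> M' M'_gt v Av /=; rewrite [leLHS]/Num.norm /= mx_normrE.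
have [M_le M0_le] : M <= M' /\ 0 <= M' by move: M'_gt; rewrite gt_max => /andP[/ltW ? /ltW].
apply: bigmax_le => // -[i k] _ /=; rewrite (ord1 i).
exact: le_trans (AM v Av k) M_le.
Qed.

Section FeasibleSetCompact.
Context {R : realType} {N : nat}.
Notation V := 'rV[R]_(N.+2 * N.+2 + N.+1).

Definition decG (v : V) : 'M[R]_N.+2 := vec_mx (lsubmx v).
Definition decf (v : V) : 'cV[R]_N.+1 := (rsubmx v)^T.
Definition enc (G : 'M[R]_N.+2) (f : 'cV[R]_N.+1) : V := row_mx (mxvec G) f^T.

Lemma decG_enc G f : decG (enc G f) = G.
Proof. by rewrite /decG /enc row_mxKl mxvecK. Qed.

Lemma decf_enc G f : decf (enc G f) = f.
Proof. by rewrite /decf /enc row_mxKr trmxK. Qed.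

Lemma enc_dec v : enc (decG v) (decf v) = v.
Proof. by rewrite /enc /decG /decf vec_mxK trmxK hsubmxK. Qed.

Lemma continuous_decG i j : continuous (fun v => decG v i j).
Proof. by under eq_fun do rewrite !mxE; apply: coord_continuous. Qed.

Lemma continuous_decf i j : continuous (fun v => decf v i j).
Proof. by under eq_fun do rewrite !mxE; apply: coord_continuous. Qed.

Lemma continuous_mxtrace_mul (A : 'M[R]_N.+2) :
  continuous (fun v => \tr (decG v *m A)).
Proof.
have trE v : \tr (decG v *m A) = \sum_i \sum_j A j i * decG v i j.
  by apply: eq_bigr => i _; rewrite mxE; apply: eq_bigr => j _; rewrite mulrC.
under eq_fun do rewrite trE; apply: continuous_sum_mul_entries; exact: continuous_decG.
Qed.

Lemma continuous_bform x : continuous (fun v => bform (decG v) x x).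
Proof.
have bE v : bform (decG v) x x = \sum_i \sum_j (x i 0 * x j 0) * decG v i j.
  by rewrite bformE; apply: eq_bigr => i _; apply: eq_bigr => j _; rewrite mulrAC.
under eq_fun do rewrite bE; apply: continuous_sum_mul_entries; exact: continuous_decG.
Qed.

Lemma continuous_fI o : continuous (fun v => fI (decf v) o).
Proof. by case: o => [k|] /=; [apply: continuous_decf | apply: cst_continuous]. Qed.

Lemma continuous_sdp_obj b C : continuous (fun v => sdp_obj b C (decG v) (decf v)).
Proof.
have objE v : sdp_obj b C (decG v) (decf v) =
    \sum_i \sum_j b i j * decf v i j + \tr (decG v *m C).
  by rewrite /sdp_obj mxtrace_mulC; congr (_ + _); apply: eq_bigr => i _; rewrite big_ord1.
have cf : continuous (fun v => \sum_i \sum_j b i j * decf v i j).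
  by apply: continuous_sum_mul_entries; exact: continuous_decf.
by under eq_fun do rewrite objE; move=> v; apply: (continuousD (cf v)); apply: continuous_mxtrace_mul.
Qed.

Variables (mu L Rad : R) (H : 'M[R]_N).

Definition feasible_set := [set v : V | sdp_feasible mu L Rad H (decG v) (decf v)].

Lemma sym_mx_le (G : 'M[R]_N.+2) : sym_mx G <-> forall i j, G j i <= G i j.
Proof.
split=> [symG i j | Gle]; first by rewrite -[in leRHS]symG mxE.
by apply/matrixP => i j; rewrite mxE; apply/le_anti; rewrite !Gle.
Qed.

Lemma closed_feasible_set : closed feasible_set.
Proof.
have -> : feasible_set =
  [set v | forall i j, decG v j i <= decG v i j]
  `&` [set v | forall x, 0 <= bform (decG v) x x]
  `&` [set v | forall i j, fI (decf v) j - fI (decf v) i + \tr (decG v *m Amat mu L H i j) <= 0]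
  `&` [set v | \tr (decG v *m ARmat R N) <= Rad ^+ 2].
  apply/seteqP; split => v /=; first by case=> /sym_mx_le.
  by case=> [[[/sym_mx_le]]].
apply: closedI; first apply: closedI; first apply: closedI.
- apply: closed_forall => i; apply: closed_forall => j.
  by apply: closed_le_continuous; apply: continuous_decG.
- apply: closed_forall => x; apply: closed_le_continuous; last exact: continuous_bform.
  exact: cst_continuous.
- apply: closed_forall => i; apply: closed_forall => j.
  apply: closed_le_continuous; last exact: cst_continuous.
  move=> v; exact: (continuousD (continuousB (continuous_fI j v) (continuous_fI i v))
                                 (continuous_mxtrace_mul _ v)).
- by apply: closed_le_continuous; [apply: continuous_mxtrace_mul | apply: cst_continuous].
Qed.

Hypotheses (mu_ge0 : 0 <= mu) (mu_lt_L : mu < L).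

Lemma bounded_feasible_set : bounded_set feasible_set.
Proof.
have [D entry_le] := feasible_entry_bounded Rad H mu_ge0 mu_lt_L.
have [B f_le] := feasible_f_bounded Rad H mu_ge0 mu_lt_L.
apply: (bounded_set_rV _ (Num.max D B)) => v feas k.
rewrite -[v]enc_dec /enc; case: (split_ordP k) => j ->; rewrite le_max.
  by rewrite row_mxEl; case/mxvec_indexP: j => a c; rewrite mxvecE (entry_le _ _ feas).
by rewrite row_mxEr mxE (f_le _ _ feas) orbT.
Qed.

Lemma feasible_set0 : feasible_set (enc 0 0).
Proof.
rewrite /feasible_set /= decG_enc decf_enc; split.
- by rewrite /sym_mx trmx0.
- by move=> x; rewrite mulmx0 mul0mx mxE.
- by move=> [i|] [j|]; rewrite mul0mx mxtrace0 addr0 /= ?mxE subrr.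
- by rewrite mul0mx mxtrace0 sqr_ge0.
Qed.

End FeasibleSetCompact.

Theorem proposition1 (R : realType) (mu L Rad : R) (N : nat)
    (H : 'M[R]_N) (b : 'cV[R]_N.+1) (C : 'M[R]_N.+2) :
  0 <= mu -> mu < L -> (1 <= N)%N -> 0 <= Rad ->
  fixed_step H -> sym_mx C ->
  exists (G : 'M[R]_N.+2) (f : 'cV[R]_N.+1),
    sdp_feasible mu L Rad H G f /\
    (forall (G' : 'M[R]_N.+2) (f' : 'cV[R]_N.+1),
        sdp_feasible mu L Rad H G' f' -> sdp_obj b C G' f' <= sdp_obj b C G f).
Proof.
move=> mu_ge0 mu_lt_L _ _ _ _.
have compact_set := bounded_closed_compact (bounded_feasible_set mu L Rad H mu_ge0 mu_lt_L)
  (closed_feasible_set mu L Rad H).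
have [v v_feas v_max] := EVT_max_rV (ex_intro _ _ (feasible_set0 mu L Rad H)) compact_set
  (continuous_subspaceT (continuous_sdp_obj b C)).
exists (decG v), (decf v); split; first by move: v_feas; rewrite inE.
move=> G' f' feas'; have := v_max (enc G' f'); rewrite !decG_enc decf_enc; apply.
by rewrite inE /feasible_set /= decG_enc decf_enc.
Qed.
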